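(* Let $D$ be a drawing in $[0,a]\times[0,b]$ with segments $e_1,\dots,e_\ell$, let $K\subset\mathbb{R}^\ell$ be the linear space of intensity vectors $(s_1,\dots,s_\ell)$ satisfying Kirchhoff's law at every interior node of $D$, and $d=\dim K$. Call a parametrization an injective map $\tau:\{1,\dots,d\}\to\{1,\dots,\ell\}$ such that the map $K\to\mathbb{R}^d$, $(s_i)_i\mapsto(s_{\tau(j)})_j$, is bijective, and let $\mathfrak{D}_\tau:\mathbb{R}^d\to K\subset\mathbb{R}^\ell$ be its inverse. Then for any two parametrizations $\tau,\tau'$, $$\left|\det\left(\mathfrak{D}_\tau^{-1}\circ\mathfrak{D}_{\tau'}\right)\right|=1,$$ where $\mathfrak{D}_\tau^{-1}:K\to\mathbb{R}^d$ denotes the inverse of $\mathfrak{D}_\tau$ onto its image $K$.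
   Context: A drawing in the box $[0,a]\times[0,b]$ is a finite collection of weighted segments $((x_-,y_-),(x_+,y_+),s)$, each vertical ($x_-=x_+$, $y_-<y_+$) or horizontal ($y_-=y_+$, $x_-<x_+$), with real intensity $s$, whose endpoints are nodes. Nodes on the box boundary are entries (bottom/left sides, where a segment starts) and exits (top/right sides, where a segment ends); every other node is interior and is the meeting point of segments coming from the south and/or west and leaving to the north and/or east (splits: one incoming and two outgoing segments; turns: one incoming, one outgoing of the other direction; coalescences: two incoming, one outgoing; crossings: two incoming, two outgoing). Kirchhoff's law at an interior node: the sum of the intensities of the segments arriving from the south and the west equals the sum of the intensities of the segments leaving to the north and the east. *)

From HB Require Import structures.
From mathcomp Require Import all_boot all_order all_algebra.
From mathcomp Require Import reals.
Set Implicit Arguments. Unset Strict Implicit. Unset Printing Implicit Defensive.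
Import Order.TTheory GRing.Theory Num.Theory.
Local Open Scope ring_scope.

(* A point of the plane and a segment (start point, end point).
   Segments are oriented south->north (vertical) or west->east (horizontal). *)
Definition point (R : realType) := (R * R)%type.
Definition segment (R : realType) := (point R * point R)%type.

Section Drawing.
Variables (R : realType) (a b : R).

Definition in_box (p : point R) : Prop :=
  0 <= p.1 <= a /\ 0 <= p.2 <= b.
Definition interior (p : point R) : Prop :=
  0 < p.1 < a /\ 0 < p.2 < b.

Definition is_vertical (e : segment R) : Prop := e.1.1 = e.2.1 /\ e.1.2 < e.2.2.
Definition is_horizontal (e : segment R) : Prop := e.1.2 = e.2.2 /\ e.1.1 < e.2.1.

Variables (ell : nat) (e : 'I_ell -> segment R).

Definition vertb (i : 'I_ell) : bool := (e i).1.1 == (e i).2.1.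

(* numbers of segments arriving from the south / west, leaving to the north / east *)
Definition in_S (p : point R) := #|[pred i | ((e i).2 == p) && vertb i]|.
Definition in_W (p : point R) := #|[pred i | ((e i).2 == p) && ~~ vertb i]|.
Definition out_N (p : point R) := #|[pred i | ((e i).1 == p) && vertb i]|.
Definition out_E (p : point R) := #|[pred i | ((e i).1 == p) && ~~ vertb i]|.

Definition is_node (p : point R) : Prop := exists i, (e i).1 = p \/ (e i).2 = p.

(* an interior node is a split, a turn, a coalescence or a crossing *)
Definition interior_node_ok (p : point R) : Prop :=
  (in_S p <= 1)%N /\ (in_W p <= 1)%N /\ (out_N p <= 1)%N /\ (out_E p <= 1)%N /\
  (1 <= in_S p + in_W p)%N /\ (1 <= out_N p + out_E p)%N /\
  ~ [/\ in_S p = 1%N, out_N p = 1%N, in_W p = 0%N & out_E p = 0%N] /\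
  ~ [/\ in_W p = 1%N, out_E p = 1%N, in_S p = 0%N & out_N p = 0%N].

Definition is_drawing : Prop :=
  0 < a /\ 0 < b /\
      (forall i, is_vertical (e i) \/ is_horizontal (e i)) /\
      (forall i, in_box (e i).1 /\ in_box (e i).2) /\
      (forall i, ~ interior (e i).1 -> (e i).1.2 = 0 \/ (e i).1.1 = 0) /\
      (forall i, ~ interior (e i).2 -> (e i).2.2 = b \/ (e i).2.1 = a) /\
      (forall p, interior p -> is_node p -> interior_node_ok p).

Definition kirchhoff (s : 'rV[R]_ell) : Prop :=
  forall p : point R, interior p ->
    \sum_(i | (e i).2 == p) s 0 i = \sum_(i | (e i).1 == p) s 0 i.

Definition proj (d : nat) (tau : 'I_d -> 'I_ell) (s : 'rV[R]_ell) : 'rV[R]_d :=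
  \row_j s 0 (tau j).

Definition is_parametrization (d : nat) (tau : 'I_d -> 'I_ell) : Prop :=
  injective tau /\
  forall v : 'rV[R]_d, exists! s : 'rV[R]_ell, kirchhoff s /\ proj tau s = v.

Definition param_inverse (d : nat) (tau : 'I_d -> 'I_ell)
  (D : 'rV[R]_d -> 'rV[R]_ell) : Prop :=
  forall v, kirchhoff (D v) /\ proj tau (D v) = v.

End Drawing.

From mathcomp Require Import all_boot all_order all_algebra.
From mathcomp Require Import reals.
Set Implicit Arguments. Unset Strict Implicit. Unset Printing Implicit Defensive.
Import Order.TTheory GRing.Theory Num.Theory.
Local Open Scope ring_scope.

(* The Kirchhoff vectors are the left kernel of the incidence matrix of the
   drawing (segments against interior nodes), whose rows have at most one
   entry 1 (at the end of the segment) and at most one entry -1 (at its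
   start).  Such a matrix is totally unimodular, so by Cramer's rule on an
   invertible square block a Kirchhoff vector that is integral on the
   parameters of a parametrization is integral.  The two change-of-parameters
   matrices are thus integral and inverse to each other, and their
   determinants are integers with product 1. *)

Section SignedIncidence.
Variable R : numFieldType.

Definition sign_or_zero (x : R) := [\/ x = 0, x = 1 | x = -1].

Lemma sign_or_zeroM x y :
  sign_or_zero x -> sign_or_zero y -> sign_or_zero (x * y).
Proof.
case=> ->; case=> ->; rewrite ?mul0r ?mulr0 ?mul1r ?mulN1r ?opprK;
  by [constructor 1 | constructor 2 | constructor 3].
Qed.

Lemma sign_or_zero_sign k : sign_or_zero ((-1) ^+ k).
Proof. by rewrite -signr_odd; case: odd; [constructor 3 | constructor 2]. Qed.

Lemma det_mxOver (S : subringClosed R) n (A : 'M[R]_n) :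
  A \is a mxOver S -> \det A \in S.
Proof.
move=> /mxOverP AS; apply: rpred_sum => s _.
by rewrite rpredM ?rpredX ?rpredN1 //; apply: rpred_prod.
Qed.

Lemma oner_neqN1 : (1 : R) != -1.
Proof. by rewrite -subr_eq0 opprK -mulr2n pnatr_eq0. Qed.

Definition signed_incidence m n (M : 'M[R]_(m, n)) :=
  (forall i j, sign_or_zero (M i j)) /\
  (forall i j j', M i j != 0 -> M i j = M i j' -> j = j').

Lemma signed_incidence_mxsub m n m' n' (f : 'I_m' -> 'I_m) (g : 'I_n' -> 'I_n)
    (M : 'M[R]_(m, n)) :
  injective g -> signed_incidence M -> signed_incidence (mxsub f g M).
Proof.
move=> g_inj [Msign Muniq]; split=> i j; rewrite !mxE //.
by move=> j' Mij0; rewrite mxE => /(Muniq _ _ _ Mij0) /g_inj.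
Qed.

Lemma signed_incidence_row_cases m n (M : 'M[R]_(m, n)) i :
  signed_incidence M ->
  (exists j, forall j', j' != j -> M i j' = 0) \/ \sum_j M i j = 0.
Proof.
move=> [Msign Muniq].
have eq_of_val j j' c : M i j = c -> M i j' = c -> c != 0 -> j = j'.
  by move=> Mj Mj' c0; apply: (Muniq i); rewrite Mj ?Mj'.
have one_neq0 : (1 : R) != 0 := oner_neq0 R.
have N1_neq0 : (-1 : R) != 0 by rewrite oppr_eq0.
case: (pickP (fun j => M i j == 1)) => [p /eqP Mp | no1];
  case: (pickP (fun j => M i j == -1)) => [q /eqP Mq | noN1].
- right; have qp : q != p.
    by move: oner_neqN1; apply: contra_neq => qp; rewrite -Mq -Mp qp.
  rewrite (bigD1 p) // (bigD1 q) //= big1 ?addr0 ?Mp ?Mq ?subrr //.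
  move=> j /andP [jp jq].
  case: (Msign i j) => // Mj.
    by rewrite (eq_of_val _ _ _ Mj Mp one_neq0) eqxx in jp.
  by rewrite (eq_of_val _ _ _ Mj Mq N1_neq0) eqxx in jq.
- left; exists p => j jp; case: (Msign i j) => // Mj.
    by rewrite (eq_of_val _ _ _ Mj Mp one_neq0) eqxx in jp.
  by move: (noN1 j); rewrite Mj eqxx.
- left; exists q => j jq; case: (Msign i j) => // Mj.
    by move: (no1 j); rewrite Mj eqxx.
  by rewrite (eq_of_val _ _ _ Mj Mq N1_neq0) eqxx in jq.
- right; apply: big1 => j _; case: (Msign i j) => // Mj.
    by move: (no1 j); rewrite Mj eqxx.
  by move: (noN1 j); rewrite Mj eqxx.
Qed.

Lemma det_signed_incidence n (M : 'M[R]_n) :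
  signed_incidence M -> sign_or_zero (\det M).
Proof.
elim: n M => [|n IH] M hM; first by rewrite det_mx00; constructor 2.
have [/existsP [i /existsP [j /forallP single]] | no_single] :=
  boolP [exists i, exists j, [forall j', (j' != j) ==> (M i j' == 0)]].
  rewrite (expand_det_row _ i) (bigD1 j) //= big1 ?addr0 => [|j' j'j]; last first.
    by rewrite (eqP (implyP (single j') j'j)) mul0r.
  apply: sign_or_zeroM; first exact: hM.1.
  apply: sign_or_zeroM; first exact: sign_or_zero_sign.
  rewrite row'Esub col'Esub -mxsubrc.
  exact: IH _ (signed_incidence_mxsub (lift i) lift_inj hM).
constructor 1; apply/eqP; rewrite -det_tr; apply/det0P.
exists (const_mx 1).
  by apply/eqP => /matrixP /(_ 0 0); rewrite !mxE => /eqP; rewrite oner_eq0.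
apply/rowP => i; rewrite !mxE.
have [[j single] | sum0] := signed_incidence_row_cases i hM.
  case/existsP: no_single; exists i; apply/existsP; exists j.
  by apply/forallP => j'; apply/implyP => /single ->.
by rewrite -[RHS]sum0; apply: eq_bigr => j _; rewrite !mxE mul1r.
Qed.

Lemma natr_bool_sub_eq1 (h t : bool) : h%:R - t%:R = 1 :> R -> h.
Proof.
by case: h; case: t; rewrite //= ?subrr ?sub0r => /eqP;
  rewrite ?(eq_sym 0) ?oner_eq0 // eq_sym (negPf oner_neqN1).
Qed.

Lemma natr_bool_sub_eqN1 (h t : bool) : h%:R - t%:R = -1 :> R -> t.
Proof.
by case: h; case: t; rewrite //= ?subrr ?subr0 => /eqP;
  rewrite ?(negPf oner_neqN1) // eq_sym oppr_eq0 oner_eq0.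
Qed.

Definition incidence_mx (T : eqType) l m (tail head : 'I_l -> T) (v : 'I_m -> T) :
    'M[R]_(l, m) :=
  \matrix_(i, j) ((head i == v j)%:R - (tail i == v j)%:R).

Lemma mul_incidence_mx (T : eqType) l m (tail head : 'I_l -> T) (v : 'I_m -> T)
    (s : 'rV[R]_l) j :
  (s *m incidence_mx tail head v) 0 j =
    \sum_(i | head i == v j) s 0 i - \sum_(i | tail i == v j) s 0 i.
Proof.
rewrite mxE !(big_mkcond (fun i => _ == _)) -sumrB /=.
by apply: eq_bigr => i _; rewrite mxE mulrBr !mulr_natr; case: eqP; case: eqP.
Qed.

Lemma signed_incidence_incidence_mx (T : eqType) l m (tail head : 'I_l -> T)
    (v : 'I_m -> T) :
  injective v -> signed_incidence (incidence_mx tail head v).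
Proof.
move=> v_inj; split=> i j; rewrite !mxE.
  by case: eqP; case: eqP; rewrite ?subrr ?subr0 ?sub0r;
    [constructor 1 | constructor 2 | constructor 3 | constructor 1].
move=> j' Mij0 Mijj'; apply: v_inj; move: Mij0 Mijj'; rewrite mxE.
case: (head i =P v j) => [-> | _]; case: (tail i =P v j) => [-> | _];
  rewrite ?subrr ?eqxx //= ?subr0 ?sub0r => _.
- by move/esym/natr_bool_sub_eq1/eqP.
- by move/esym/natr_bool_sub_eqN1/eqP.
Qed.

Lemma adj_signed_incidence n (M : 'M[R]_n) i j :
  signed_incidence M -> sign_or_zero (\adj M i j).
Proof.
move=> hM; rewrite mxE; apply: sign_or_zeroM; first exact: sign_or_zero_sign.
rewrite row'Esub col'Esub -mxsubrc.
exact/det_signed_incidence/(signed_incidence_mxsub _ lift_inj hM).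
Qed.

End SignedIncidence.

Arguments incidence_mx {R T l m}.

Section Integrality.
Variable R : archiNumFieldType.

Lemma sign_or_zero_int (x : R) : sign_or_zero x -> x \is a Num.int.
Proof. by case=> ->; rewrite ?rpred0 ?rpred1 ?rpredN1. Qed.

Lemma signed_incidence_int_solution m n (A : 'M[R]_(m, n)) (x : 'rV[R]_m) :
  signed_incidence A -> row_free A ->
  x *m A \is a mxOver Num.int -> x \is a mxOver Num.int.
Proof.
move=> hA freeA xA_int.
have fullAT : row_full A^T by rewrite /row_full mxrank_tr.
set f := fullrankfun fullAT; set B := colsub f A.
have B_unit : B \in unitmx by rewrite -unitmx_tr trmx_mxsub fullrowsub_unit.
have hB : signed_incidence B :=
  signed_incidence_mxsub id (fullrankfun_inj (rkA := fullAT)) hA.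
have xB_int : x *m B \is a mxOver Num.int.
  by apply/mxOverP => i j; rewrite mulmx_colsub mxE (mxOverP xA_int).
have adjB_int : \adj B \is a mxOver Num.int.
  by apply/mxOverP => i j; apply/sign_or_zero_int/adj_signed_incidence.
have := mxOverM xB_int adjB_int.
rewrite -mulmxA mul_mx_adj mul_mx_scalar.
case: (det_signed_incidence hB) => [detB0 | -> | ->].
- by move: B_unit; rewrite unitmxE detB0 unitr0.
- by rewrite scale1r.
- by rewrite scaleN1r rpredN.
Qed.

Lemma row_free_rowsub_predC l m (C : 'M[R]_(l, m)) (S : {pred 'I_l}) :
  (forall t : 'rV_l, t *m C = 0 -> {in S, forall i, t 0 i = 0} -> t = 0) ->
  row_free (rowsub (enum_val : 'I_#|[predC S]| -> 'I_l) C).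
Proof.
move=> C_inj; apply: inj_row_free => y yA0.
pose P := rowsub (enum_val : 'I_#|[predC S]| -> 'I_l) (1%:M : 'M[R]_l).
have yPE i : (y *m P) 0 i = \sum_k y 0 k * (enum_val k == i)%:R.
  by rewrite mxE; apply: eq_bigr => k _; rewrite !mxE.
have yP0 : y *m P = 0.
  apply: C_inj => [|i iS]; first by rewrite -mulmxA -rowsubE.
  rewrite yPE big1 // => k _; case: eqP => [ki | _]; rewrite ?mulr0 //.
  by have := enum_valP k; rewrite inE ki iS.
apply/rowP => k; have /rowP/(_ (enum_val k)) := yP0.
rewrite yPE (bigD1 k) //= eqxx mulr1 big1 ?addr0 ?mxE // => k' k'k.
by rewrite (inj_eq enum_val_inj) (negPf k'k) mulr0.
Qed.

Lemma signed_incidence_int_kernel l m (C : 'M[R]_(l, m)) (S : {pred 'I_l})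
    (s : 'rV[R]_l) :
  signed_incidence C ->
  (forall t : 'rV_l, t *m C = 0 -> {in S, forall i, t 0 i = 0} -> t = 0) ->
  s *m C = 0 -> {in S, forall i, s 0 i \is a Num.int} -> s \is a mxOver Num.int.
Proof.
move=> hC C_inj sC0 sS_int.
pose f : 'I_#|[predC S]| -> 'I_l := enum_val.
have xA_int : colsub f s *m rowsub f C \is a mxOver Num.int.
  apply/mxOverP => i j; rewrite {i}(ord1 i).
  have /rowP/(_ j) := sC0; rewrite !mxE (bigID (mem S)) /=.
  move=> /eqP; rewrite addrC addr_eq0 => /eqP sCF.
  rewrite (eq_bigr (fun k => s 0 (f k) * C (f k) j)) => [|k _]; last first.
    by rewrite !mxE.
  rewrite -(big_enum_val (fun i => s 0 i * C i j)) sCF rpredN.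
  apply: rpred_sum => i iS; rewrite rpredM ?sS_int //.
  exact/sign_or_zero_int/hC.1.
have := signed_incidence_int_solution (signed_incidence_mxsub f (@inj_id _) hC)
  (row_free_rowsub_predC C_inj) xA_int.
move=> /mxOverP x_int; apply/mxOverP => i0 i; rewrite ord1.
have [iS | iF] := boolP (i \in S); first exact: sS_int.
have := x_int 0 (enum_rank_in (iF : i \in [predC S]) i).
by rewrite mxE /f enum_rankK_in.
Qed.

End Integrality.

Section Kirchhoff.
Variables (R : realType) (a b : R) (ell : nat) (e : 'I_ell -> segment R).

Definition interiorb (p : point R) := (0 < p.1 < a) && (0 < p.2 < b).

Lemma interiorP p : reflect (interior a b p) (interiorb p).
Proof. exact: andP. Qed.

Definition interior_nodes : seq (point R) :=
  undup [seq p <- [seq (e i).1 | i <- enum 'I_ell] ++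
                  [seq (e i).2 | i <- enum 'I_ell] | interiorb p].

Lemma interior_nodesP p :
  reflect (interior a b p /\ exists i, (e i).1 = p \/ (e i).2 = p)
          (p \in interior_nodes).
Proof.
rewrite mem_undup mem_filter mem_cat.
apply: (iffP andP) => [[/interiorP pI] | [/interiorP pI [i pe]]].
  by case/orP=> /mapP [i _ pe]; split=> //; exists i; rewrite -pe; [left | right].
rewrite pI; case: pe => <-; split=> //; apply/orP; [left | right].
  by apply: map_f; rewrite mem_enum.
by apply: map_f; rewrite mem_enum.
Qed.

Definition kirchhoff_mx : 'M[R]_(ell, size interior_nodes) :=
  incidence_mx (fun i => (e i).1) (fun i => (e i).2)
    (tnth (in_tuple interior_nodes)).

Lemma kirchhoffE s : kirchhoff a b e s <-> s *m kirchhoff_mx = 0.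
Proof.
split=> [K | sK0 p pI].
  apply/rowP => j; rewrite mul_incidence_mx mxE K ?subrr //.
  by case/interior_nodesP: (mem_tnth j (in_tuple interior_nodes)).
have [p_node | p_not_node] := boolP (p \in interior_nodes).
  have [j ->] : exists j, p = tnth (in_tuple interior_nodes) j by apply/tnthP.
  by apply/eqP; rewrite -subr_eq0 -mul_incidence_mx sK0 mxE.
rewrite !big_pred0 // => i; apply/negP => /eqP pe; case/negP: p_not_node.
  by apply/interior_nodesP; split=> //; exists i; left.
by apply/interior_nodesP; split=> //; exists i; right.
Qed.

Lemma kirchhoff0 : kirchhoff a b e 0.
Proof. by apply/kirchhoffE; rewrite mul0mx. Qed.

Lemma kirchhoff_sumZ (I : finType) (c : I -> R) (s : I -> 'rV[R]_ell) :
  (forall k, kirchhoff a b e (s k)) -> kirchhoff a b e (\sum_k c k *: s k).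
Proof.
move=> Ks; apply/kirchhoffE; rewrite mulmx_suml big1 // => k _.
by rewrite -scalemxAl (proj1 (kirchhoffE _) (Ks k)) scaler0.
Qed.

Lemma kirchhoff_int (S : {pred 'I_ell}) s :
  (forall t, kirchhoff a b e t -> {in S, forall i, t 0 i = 0} -> t = 0) ->
  kirchhoff a b e s -> {in S, forall i, s 0 i \is a Num.int} ->
  s \is a mxOver Num.int.
Proof.
move=> K_inj /kirchhoffE sK0; apply: signed_incidence_int_kernel sK0.
  by apply/signed_incidence_incidence_mx/tuple_uniqP/undup_uniq.
by move=> t /kirchhoffE; apply: K_inj.
Qed.

End Kirchhoff.

Section Parametrization.
Variables (R : realType) (a b : R) (ell d : nat) (e : 'I_ell -> segment R).
Variables (tau : 'I_d -> 'I_ell) (D : 'rV[R]_d -> 'rV[R]_ell).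
Hypotheses (tau_param : is_parametrization a b e tau)
           (D_inv : param_inverse a b e tau D).

Lemma proj_sumZ (I : finType) (c : I -> R) (s : I -> 'rV[R]_ell) :
  proj tau (\sum_k c k *: s k) = \sum_k c k *: proj tau (s k).
Proof.
by apply/rowP => j; rewrite !mxE !summxE; apply: eq_bigr => k _; rewrite !mxE.
Qed.

Lemma kirchhoff_proj_inj s t :
  kirchhoff a b e s -> kirchhoff a b e t -> proj tau s = proj tau t -> s = t.
Proof.
move=> Ks Kt st; have [x [_ x_uniq]] := tau_param.2 (proj tau s).
by rewrite -(x_uniq s (conj Ks erefl)) -(x_uniq t (conj Kt (esym st))).
Qed.

Lemma param_inverse_tau v k : D v 0 (tau k) = v 0 k.
Proof. by have /rowP/(_ k) := (D_inv v).2; rewrite mxE. Qed.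

Lemma param_inverse_projK s : kirchhoff a b e s -> D (proj tau s) = s.
Proof.
by move=> Ks; apply: kirchhoff_proj_inj => //; case: (D_inv (proj tau s)).
Qed.

Lemma param_inverse_linear v : D v = \sum_k v 0 k *: D 'e_k.
Proof.
apply: kirchhoff_proj_inj; first exact: (D_inv v).1.
  by apply: kirchhoff_sumZ => k; exact: (D_inv _).1.
rewrite (D_inv v).2 proj_sumZ [LHS]row_sum_delta.
by apply: eq_bigr => k _; rewrite (D_inv _).2.
Qed.

Lemma param_inverse_int v : v \is a mxOver Num.int -> D v \is a mxOver Num.int.
Proof.
move=> /mxOverP v_int.
apply: (kirchhoff_int (S := [pred i | i \in codom tau])); last 2 first.
- exact: (D_inv v).1.
- by move=> i /codomP [k ->]; rewrite param_inverse_tau v_int.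
move=> t Kt t0; apply: kirchhoff_proj_inj Kt _ _; first exact: kirchhoff0.
by apply/rowP => k; rewrite !mxE t0 ?codom_f.
Qed.

End Parametrization.

Lemma lin1_mx_proj_int (R : realType) (a b : R) ell d (e : 'I_ell -> segment R)
    (tau tau' : 'I_d -> 'I_ell) (D' : 'rV[R]_d -> 'rV[R]_ell) :
  is_parametrization a b e tau' -> param_inverse a b e tau' D' ->
  lin1_mx (proj tau \o D') \is a mxOver Num.int.
Proof.
move=> tau'_param D'_inv; apply/mxOverP => i j; rewrite !mxE.
apply: (mxOverP (param_inverse_int tau'_param D'_inv _)).
by apply/mxOverP => ? ?; rewrite mxE natr_int.
Qed.

Lemma lin1_mx_proj_mul (R : realType) (a b : R) ell d (e : 'I_ell -> segment R)
    (tau tau' : 'I_d -> 'I_ell) (D D' : 'rV[R]_d -> 'rV[R]_ell) :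
  is_parametrization a b e tau -> param_inverse a b e tau D ->
  param_inverse a b e tau' D' ->
  lin1_mx (proj tau \o D') *m lin1_mx (proj tau' \o D) = 1%:M.
Proof.
move=> tau_param D_inv D'_inv; apply/matrixP => i j; rewrite mxE.
transitivity (D' 'e_i 0 (tau' j)).
  rewrite -(param_inverse_projK tau_param D_inv (D'_inv 'e_i).1).
  rewrite (param_inverse_linear tau_param D_inv) summxE.
  by apply: eq_bigr => k _; rewrite !mxE.
by rewrite (param_inverse_tau D'_inv) !mxE eqxx eq_sym.
Qed.

Lemma normr_int_mul_eq1 (R : archiNumFieldType) (x y : R) :
  x \is a Num.int -> y \is a Num.int -> x * y = 1 -> `|x| = 1.
Proof.
move=> x_int y_int xy1.
have /andP [x0 y0] : (x != 0) && (y != 0).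
  by rewrite -negb_or -mulf_eq0 xy1 oner_eq0.
have := ler_peMr (normr_ge0 x) (norm_intr_ge1 y_int y0).
rewrite -normrM xy1 normr1 => x_le1.
by apply/le_anti; rewrite x_le1 norm_intr_ge1.
Qed.

Theorem lemma3 (R : realType) (a b : R) (ell d : nat)
    (e : 'I_ell -> segment R) (tau tau' : 'I_d -> 'I_ell)
    (D D' : 'rV[R]_d -> 'rV[R]_ell) :
  is_drawing a b e ->
  is_parametrization a b e tau -> is_parametrization a b e tau' ->
  param_inverse a b e tau D -> param_inverse a b e tau' D' ->
  `| \det (lin1_mx (proj tau \o D')) | = 1.
Proof.
move=> _ tau_param tau'_param D_inv D'_inv.
have det_mul :
    \det (lin1_mx (proj tau \o D')) * \det (lin1_mx (proj tau' \o D)) = 1.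
  by rewrite -det_mulmx (lin1_mx_proj_mul tau_param D_inv D'_inv) det1.
apply: normr_int_mul_eq1 det_mul; apply: det_mxOver.
- exact: lin1_mx_proj_int tau'_param D'_inv.
- exact: lin1_mx_proj_int tau_param D_inv.
Qed.
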